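(* In the setting described in the context, for every $\xi\in\Omega_M$ the set $$\mathcal{F}(\xi):=\Big\{\mu\in\mathbb{H}^p_0:\ \int_{\mathbb{R}^n}F(z+\xi)\,d\mu(z)\le\varepsilon+R(\xi)\Big\}$$ is a non-empty subset of $Y_M$ which is closed in $Y_M$ with respect to the weak* topology of $E^*$.
   Context: $1<p<\infty$; $\Omega\subset\mathbb{R}^N$ open bounded with $|\partial\Omega|=0$; $\mathcal{A}v=\sum_{i=1}^NA^i\partial v/\partial x_i$ with linear $A^i\colon\mathbb{R}^n\to\mathbb{R}^d$, symbol $\mathbb{A}(w)=\sum w_iA^i$ of constant rank on $S^{N-1}$. $\mathbb{H}^p_0$ is the set of probability measures $\mu$ on $\mathbb{R}^n$ with $\int z\,d\mu=0$ that are homogeneous Young measures generated by a sequence $\{V_j\}\subset\mathrm{L}^p(\Omega;\mathbb{R}^n)$ with $\mathcal{A}V_j=0$ and $V_j$ weakly convergent in $\mathrm{L}^p$. $E:=\{g\in C(\mathbb{R}^n):\lim_{|z|\to\infty}g(z)/(1+|z|^p)\text{ exists in }\mathbb{R}\}$ with norm $\|g\|_E=\sup_z|g(z)|/(1+|z|^p)$; probability measures with finite $p$-th moment are regarded as elements of $E^*$. $F\colon\mathbb{R}^n\to[0,\infty]$ is lower semi-continuous with $F(\xi)\ge C|\xi|^p$ for some $C>0$. Define $R(\xi):=\inf_{\nu\in\mathbb{H}^p_0}\int F(z+\xi)\,d\nu(z)$. Fix $\varepsilon>0$ and $M\in\mathbb{N}$, let $\Omega_M:=\{\xi\in\mathbb{R}^n:|\xi|<M,\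 R(\xi)\le M\}$, let $C_M>0$ be a constant such that every $\mu\in\mathbb{H}^p_0$ with $\int F(z+\xi)\,d\mu(z)\le\varepsilon+R(\xi)$ for some $\xi\in\Omega_M$ satisfies $\int|z|^p\,d\mu\le C_M$, and let $Y_M:=\{\mu\in\mathbb{H}^p_0:\int|z|^p\,d\mu(z)\le C_M\}$, equipped with the weak* topology of $E^*$. *)

From HB Require Import structures.
From mathcomp Require Import all_boot all_order all_algebra.
From mathcomp Require Import all_classical all_reals all_analysis.
Set Implicit Arguments. Unset Strict Implicit. Unset Printing Implicit Defensive.
Import Order.TTheory GRing.Theory Num.Theory.
Import numFieldNormedType.Exports.
Local Open Scope classical_set_scope.
Local Open Scope ring_scope.

Section Setting.
Context {R : realType}.

(** R^k is represented by row vectors 'rV[R]_k with the (product) topology of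
    matrix_topology; measurable structure = Borel sigma-algebra generated by
    the open sets. *)
Definition borel_rV (k : nat) := g_sigma_algebraType (@open 'rV[R]_k).

Definition enorm {k} (v : 'rV[R]_k) : R := Num.sqrt (\sum_i (v ord0 i) ^+ 2).
Definition dotv {k} (u v : 'rV[R]_k) : R := \sum_i u ord0 i * v ord0 i.

Definition evec {k} (i : 'I_k) : 'rV[R]_k := delta_mx ord0 i.

(** lam is the Lebesgue measure on the Borel sets of R^N: the measure of
    every closed box is the product of its side lengths (this determines
    lam uniquely). *)
Definition is_lebesgue {N} (lam : {measure set (borel_rV N) -> \bar R}) :=
  forall a b : 'rV[R]_N, (forall i, a ord0 i <= b ord0 i) ->
    lam [set x : borel_rV N | forall i, a ord0 i <= x ord0 i <= b ord0 i]
    = (\prod_i (b ord0 i - a ord0 i))%:E.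

Definition boundary {N} (O : set 'rV[R]_N) := closure O `\` interior O.

Definition Lp {N k} (lam : {measure set (borel_rV N) -> \bar R})
    (O : set (borel_rV N)) (q : R) (V : borel_rV N -> borel_rV k) :=
  measurable_fun O V /\
  (\int[lam]_(x in O) ((enorm (V x)) `^ q)%:E < +oo)%E.

Definition weakly_conv_Lp {N k} (lam : {measure set (borel_rV N) -> \bar R})
    (O : set (borel_rV N)) (p : R) (V : nat -> borel_rV N -> borel_rV k) :=
  exists V0, Lp lam O p V0 /\
    forall W : borel_rV N -> borel_rV k, Lp lam O (p / (p - 1)) W ->
      (fun j => Rintegral lam O (fun x => dotv (V j x) (W x)))
        @ \oo --> Rintegral lam O (fun x => dotv (V0 x) (W x)).

Fixpoint iter_partial {N d} (s : seq 'I_N) (phi : 'rV[R]_N -> 'rV[R]_d)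
  : 'rV[R]_N -> 'rV[R]_d :=
  match s with
  | [::] => phi
  | i :: s' => fun x => 'D_(evec i) (iter_partial s' phi) x
  end.

Definition test_fun {N d} (O : set 'rV[R]_N) (phi : 'rV[R]_N -> 'rV[R]_d) :=
  (forall s : seq 'I_N, continuous (iter_partial s phi) /\
     forall i x, derivable (iter_partial s phi) x (evec i)) /\
  exists K : set 'rV[R]_N, compact K /\ K `<=` O /\
     forall x, ~ K x -> phi x = 0.

(** The first order operator A v = sum_i A^i dv/dx_i, with A^i : R^n -> R^d
    linear, represented by the matrices A i acting on row vectors
    (v |-> v *m A i).  A V = 0 in the sense of distributions on O. *)
Definition A_free {N n d} (lam : {measure set (borel_rV N) -> \bar R})
    (O : set (borel_rV N)) (A : 'I_N -> 'M[R]_(n, d))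
    (V : borel_rV N -> borel_rV n) :=
  forall phi : 'rV[R]_N -> 'rV[R]_d, test_fun O phi ->
    Rintegral lam O
      (fun x => \sum_i dotv (V x *m A i) ('D_(evec i) phi x)) = 0.

Definition symbol {N n d} (A : 'I_N -> 'M[R]_(n, d)) (w : 'rV[R]_N)
  : 'M[R]_(n, d) := \sum_i w ord0 i *: A i.
Definition constant_rank {N n d} (A : 'I_N -> 'M[R]_(n, d)) :=
  exists r : nat, forall w : 'rV[R]_N, enorm w = 1 -> \rank (symbol A w) = r.

Definition vanishes_at_infty {n} (phi : 'rV[R]_n -> R) :=
  forall e : R, 0 < e -> exists r : R, forall z, r < enorm z -> `|phi z| < e.

(** the sequence V generates the homogeneous Young measure mu:
    phi(V_j) -> int phi dmu weakly* in L^oo(O) for every phi in C_0(R^n) *)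
Definition generates_hom_YM {N n} (lam : {measure set (borel_rV N) -> \bar R})
    (O : set (borel_rV N)) (V : nat -> borel_rV N -> borel_rV n)
    (mu : probability (borel_rV n) R) :=
  forall phi : 'rV[R]_n -> R, continuous phi -> vanishes_at_infty phi ->
  forall g : borel_rV N -> R, measurable_fun O g ->
    lam.-integrable O (fun x => (g x)%:E) ->
    (fun j => Rintegral lam O (fun x => g x * phi (V j x)))
      @ \oo --> Rintegral lam O g * Rintegral mu setT phi.

Definition Hp0 {N n d} (p : R) (lam : {measure set (borel_rV N) -> \bar R})
    (O : set (borel_rV N)) (A : 'I_N -> 'M[R]_(n, d))
    (mu : probability (borel_rV n) R) :=
  (forall k : 'I_n, mu.-integrable setT (fun z : borel_rV n => (z ord0 k)%:E) /\
     (\int[mu]_z (z ord0 k)%:E = 0)%E) /\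
  exists V : nat -> borel_rV N -> borel_rV n,
    (forall j, Lp lam O p (V j)) /\ (forall j, A_free lam O A (V j)) /\
    weakly_conv_Lp lam O p V /\ generates_hom_YM lam O V mu.

Definition inE {n} (p : R) (g : 'rV[R]_n -> R) :=
  continuous g /\
  exists L : R, forall e : R, 0 < e -> exists r : R, forall z,
    r < enorm z -> `|g z / (1 + enorm z `^ p) - L| < e.

Definition pairing {n} (mu : probability (borel_rV n) R) (g : 'rV[R]_n -> R)
  : \bar R := (\int[mu]_z (g z)%:E)%E.

(** S is closed in Y for the (subspace topology of the) weak* topology of E^*:
    every element of Y lying in the weak* closure of S belongs to S, where
    the weak* closure is described by the basic weak* neighbourhoods
    {nu : |<nu,g_i> - <mu,g_i>| < delta, i = 1..m}, g_i in E. *)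
Definition weakstar_closed_in {n} (p : R)
    (Y S : set (probability (borel_rV n) R)) :=
  forall mu, Y mu ->
    (forall (gs : seq ('rV[R]_n -> R)) (delta : R),
        (forall g, g \in gs -> inE p g) -> 0 < delta ->
        exists2 nu, S nu & forall g, g \in gs ->
          (`| pairing nu g - pairing mu g | < delta%:E)%E) ->
    S mu.

Definition Rfun {N n d} (p : R) (lam : {measure set (borel_rV N) -> \bar R})
    (O : set (borel_rV N)) (A : 'I_N -> 'M[R]_(n, d))
    (F : 'rV[R]_n -> \bar R) (xi : 'rV[R]_n) : \bar R :=
  ereal_inf [set (\int[nu]_z F ((z : 'rV[R]_n) + xi)%R)%E | nu in Hp0 p lam O A].

Definition pmoment {n} (p : R) (mu : probability (borel_rV n) R) : \bar R :=
  (\int[mu]_z ((enorm z) `^ p)%:E)%E.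

End Setting.

From Pilot Require Import Defs.
From HB Require Import structures.
From mathcomp Require Import all_boot all_order all_algebra.
From mathcomp Require Import all_classical all_reals all_analysis.
From mathcomp Require Import lra measurable_realfun.

Set Implicit Arguments.
Unset Strict Implicit.
Unset Printing Implicit Defensive.

Import Order.TTheory GRing.Theory Num.Theory.
Import numFieldNormedType.Exports.
Local Open Scope classical_set_scope.
Local Open Scope ring_scope.

(** Nonemptiness holds because R(xi) is a finite infimum, and the inclusion in
    [Y_M] is the defining property of [C_M].  For closedness, the nonnegative lower
    semicontinuous integrand [F] (translated by [xi]) is the increasing limit of the
    bounded Lipschitz functions [g_k z = inf_y (min k (F y) + k |z - y|)].  Each [g_k]
    lies in [E], so [nu |-> \int g_k dnu] is weak* continuous and the bound
    [\int g_k dnu <= \int F dnu <= eps + R(xi)] passes from the set to its weak*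
    closure; monotone convergence in [k] then bounds [\int F dmu] itself. *)

Lemma lee_lt_finP {R : realType} (x y : \bar R) :
  reflect (forall a : R, (a%:E < x)%E -> (a%:E <= y)%E) (x <= y)%E.
Proof.
apply: (iffP idP) => [xy a /ltW ax|ay]; first exact: le_trans xy.
case: x ay => [x| |] ay; last 2 first.
- by rewrite leye_eq; apply/eqP/eqyP => A _; apply: ay; rewrite ltry.
- by rewrite leNye.
apply/lee_subgt0Pr => e e0; apply: ay.
by rewrite lte_fin ltrBlDr ltrDl.
Qed.

Lemma lte_dist_lee {R : realType} (x y : \bar R) (e : R) :
  x \is a fin_num -> y \is a fin_num -> (`|x - y| < e%:E)%E -> (y <= x + e%:E)%E.
Proof.
move: x y => [x| |] [y| |] // _ _.
by rewrite -EFinD lee_fin lte_fin ltr_norml => /andP[xy _]; lra.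
Qed.

Section lipschitz_envelope.
Context {R : realType} {V : normedModType R}.
Implicit Types (f g : V -> R) (k c : R) (y z : V).

Definition lip_envelope f k z : R := inf (range (fun y => f y + k * `|z - y|)).

Lemma lip_envelope_ge f k z c :
  (forall y, c <= f y + k * `|z - y|) -> c <= lip_envelope f k z.
Proof.
by move=> fc; apply: lb_le_inf => [|_ [y _ <-]]; [exists (f z + k * `|z - z|), z|].
Qed.

Section nonnegative.
Variables (f : V -> R) (k : R).
Hypotheses (f_ge0 : forall y, 0 <= f y) (k_ge0 : 0 <= k).

Lemma lip_envelope_le z y : lip_envelope f k z <= f y + k * `|z - y|.
Proof.
apply: ge_inf; last by exists y.
by exists 0 => _ [w _ <-]; rewrite addr_ge0 ?mulr_ge0.
Qed.

Lemma lip_envelope_ge0 z : 0 <= lip_envelope f k z.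
Proof. by apply: lip_envelope_ge => y; rewrite addr_ge0 ?mulr_ge0. Qed.

Lemma lip_envelope_le_fun z : lip_envelope f k z <= f z.
Proof. by have := lip_envelope_le z z; rewrite subrr normr0 mulr0 addr0. Qed.

Lemma lip_envelope_lipschitz z z' :
  lip_envelope f k z <= lip_envelope f k z' + k * `|z - z'|.
Proof.
rewrite -lerBlDr; apply: lip_envelope_ge => y; rewrite lerBlDr.
apply: le_trans (lip_envelope_le z y) _; rewrite -addrA lerD2l -mulrDr.
by rewrite ler_wpM2l // [X in _ <= X]addrC ler_distD.
Qed.

Lemma continuous_lip_envelope : continuous (lip_envelope f k).
Proof.
move=> x; apply/(@cvgrPdist_lt _ _ _ (nbhs x)) => e e0.
have k1_gt0 : 0 < k + 1 by rewrite ltr_wpDl.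
apply/nbhs_ballP; exists (e / (k + 1)); first by rewrite /= divr_gt0.
move=> t; rewrite -ball_normE /= ltr_pdivlMr // => xt.
have kxt : k * `|x - t| < e.
  by apply: le_lt_trans xt; rewrite mulrC ler_wpM2l // lerDl.
have H1 := lip_envelope_lipschitz x t; have H2 := lip_envelope_lipschitz t x.
rewrite distrC in H2; apply: le_lt_trans kxt.
rewrite ler_norml; apply/andP; split; lra.
Qed.

End nonnegative.

Lemma lip_envelope_homo f g k k' z :
  (forall y, 0 <= f y <= g y) -> 0 <= k <= k' ->
  lip_envelope f k z <= lip_envelope g k' z.
Proof.
move=> fg /andP[k0 kk']; have f0 w : 0 <= f w by case/andP: (fg w).
apply: lip_envelope_ge => y; apply: le_trans (lip_envelope_le f0 k0 z y) _.
by rewrite lerD ?ler_wpM2r //; case/andP: (fg y).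
Qed.

End lipschitz_envelope.

Section lsc_approximation.
Context {R : realType} {V : normedModType R} (F : V -> \bar R).
Hypothesis F_ge0 : forall y, (0 <= F y)%E.

Definition capF (k : nat) (y : V) : R := fine (Order.min k%:R%:E (F y)).

Lemma capFE k y : (capF k y)%:E = Order.min k%:R%:E (F y).
Proof.
rewrite /capF; have := F_ge0 y; case: (F y) => [r| |] //= r0.
- by rewrite -EFin_min.
- by rewrite minEle leey.
Qed.

Lemma capF_ge0 k y : 0 <= capF k y.
Proof. by rewrite -lee_fin capFE le_min lee_fin ler0n F_ge0. Qed.

Lemma capF_le k y : capF k y <= k%:R.
Proof. by rewrite -lee_fin capFE ge_min lexx. Qed.

Lemma capF_le_fun k y : ((capF k y)%:E <= F y)%E.
Proof. by rewrite capFE ge_min lexx orbT. Qed.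

Definition lsc_approx (k : nat) : V -> R := lip_envelope (capF k) k%:R.

Lemma lsc_approx_ge0 k z : 0 <= lsc_approx k z.
Proof. exact: lip_envelope_ge0 (capF_ge0 k) (ler0n R k) z. Qed.

Lemma lsc_approx_le_cap k z : lsc_approx k z <= capF k z.
Proof. exact: lip_envelope_le_fun (capF_ge0 k) (ler0n R k) z. Qed.

Lemma lsc_approx_le k z : lsc_approx k z <= k%:R.
Proof. exact: le_trans (lsc_approx_le_cap k z) (capF_le k z). Qed.

Lemma lsc_approx_le_fun k z : ((lsc_approx k z)%:E <= F z)%E.
Proof. by apply: le_trans (capF_le_fun k z); rewrite lee_fin lsc_approx_le_cap. Qed.

Lemma lsc_approx_nondecreasing z : nondecreasing_seq (lsc_approx ^~ z).
Proof.
apply/nondecreasing_seqP => k; apply: lip_envelope_homo.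
  move=> y; rewrite capF_ge0 -lee_fin !capFE le_min !ge_min lexx.
  by rewrite lee_fin ler_nat leqnSn !orbT.
by rewrite ler0n ler_nat leqnSn.
Qed.

Lemma continuous_lsc_approx k : continuous (lsc_approx k).
Proof. exact: continuous_lip_envelope (capF_ge0 k) (ler0n R k). Qed.

Hypothesis F_lsc : lower_semicontinuous F.

Lemma exists_lsc_approx_ge z a : (a%:E < F z)%E -> exists k, a <= lsc_approx k z.
Proof.
move=> aFz; have [a0|a0] := leP a 0.
  by exists 0%N; exact: le_trans (lsc_approx_ge0 0 z).
have [U Uz UF] := F_lsc aFz.
have [r r0 rU] := (nbhs_ballP z U).1 Uz.
(* In the ball the cap [min k (F y)] exceeds [a]; outside it the penalty
   [k * `|z - y|] does. *)
pose k := (Num.truncn (a + a / r)).+1.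
have ak_lt : a + a / r < k%:R by exact: truncnS_gt.
have ak : a <= k%:R.
  by apply/ltW/(le_lt_trans _ ak_lt); rewrite lerDl divr_ge0 // ltW.
have akr : a <= k%:R * r.
  by rewrite -ler_pdivrMr //; apply/ltW/(le_lt_trans _ ak_lt); rewrite lerDr ltW.
exists k; apply: lip_envelope_ge => y.
have [zy|zy] := ltP `|z - y| r.
  have /UF aFy : U y by apply: rU; rewrite -ball_normE.
  apply: ler_wpDr; first by rewrite mulr_ge0.
  by rewrite -lee_fin capFE le_min lee_fin ak (ltW aFy).
by apply: ler_wpDl; [exact: capF_ge0 | apply: le_trans akr _; rewrite ler_wpM2l].
Qed.

Lemma lsc_approx_cvg z : (fun k => (lsc_approx k z)%:E) @ \oo --> F z.
Proof.
have nd : nondecreasing_seq (fun k => (lsc_approx k z)%:E).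
  by move=> i j ij; rewrite lee_fin lsc_approx_nondecreasing.
suff <- : ereal_sup (range (fun k => (lsc_approx k z)%:E)) = F z.
  exact: ereal_nondecreasing_cvgn.
apply/eqP; rewrite eq_le; apply/andP; split.
  by apply: ge_ereal_sup => _ [k _ <-]; exact: lsc_approx_le_fun.
apply/lee_lt_finP => a /exists_lsc_approx_ge[k ak].
apply: (@le_trans _ _ (lsc_approx k z)%:E); first by rewrite lee_fin.
by apply: ereal_sup_ubound; exists k.
Qed.

End lsc_approximation.

Section borel_rV.
Context {R : realType} {n : nat}.

Lemma continuous_measurable_rV (f : 'rV[R]_n -> R) :
  continuous f -> measurable_fun setT (f : borel_rV n -> R).
Proof.
move=> /continuousP cf; apply: (measurability _ (RGenOpens.measurableE R)).
move=> _ [_ [a [b ->] <-]]; rewrite setTI.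
by apply: sub_sigma_algebra; apply: cf; exact: interval_open.
Qed.

Lemma lower_semicontinuous_measurable_rV (F : 'rV[R]_n -> \bar R) :
  lower_semicontinuous F -> measurable_fun setT (F : borel_rV n -> \bar R).
Proof.
move=> /lower_semicontinuousP Fo.
apply: (measurability _ (ErealGenOInfty.measurableE R)).
move=> _ [_ [a ->] <-]; rewrite setTI preimage_itvoy.
exact: sub_sigma_algebra.
Qed.

Lemma pairing_fin_num (mu : probability (borel_rV n) R) (g : 'rV[R]_n -> R) (K : R) :
  continuous g -> (forall z, `|g z| <= K) -> pairing mu g \is a fin_num.
Proof.
move=> gc gK; apply: integrable_fin_num => //.
apply: measurable_bounded_integrable => //.
- by apply: le_lt_trans (probability_le1 mu measurableT) _; rewrite ltry.
- exact: (continuous_measurable_rV gc).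
- exists K; split => [|M KM z _]; first exact: num_real.
  exact: le_trans (gK z) (ltW KM).
Qed.

End borel_rV.

Lemma bounded_continuous_inE {R : realType} {n : nat} (p : R) (g : 'rV[R]_n -> R)
    (K : R) :
  0 < p -> continuous g -> (forall z, `|g z| <= K) -> Defs.inE p g.
Proof.
move=> p0 gc gK; split => //; exists 0 => e e0.
have K0 : 0 <= K by apply: le_trans (gK 0).
exists ((K / e) `^ p^-1) => z rz; set t := enorm z in rz *.
have t0 : 0 <= t by exact: sqrtr_ge0.
have Ket : K < e * t `^ p.
  rewrite mulrC -ltr_pdivrMr // -[K / e]powRr1 ?divr_ge0 // ?ltW //.
  rewrite -(mulVf (lt0r_neq0 p0)) powRrM; apply: gt0_ltr_powR => //.
  by rewrite nnegrE powR_ge0.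
have tp1 : 0 < 1 + t `^ p by rewrite ltr_pwDl // powR_ge0.
rewrite subr0 normrM normfV (gtr0_norm tp1) ltr_pdivrMr //.
by apply: le_lt_trans (gK z) _; apply: lt_le_trans Ket _; rewrite ler_pM2l // lerDr.
Qed.

Lemma lower_semicontinuous_comp {X Y : topologicalType} {R : realType}
    (g : X -> Y) (F : Y -> \bar R) :
  continuous g -> lower_semicontinuous F -> lower_semicontinuous (F \o g).
Proof.
move=> gc /lower_semicontinuousP Fo; apply/lower_semicontinuousP => a.
exact: (continuousP g).1 gc _ (Fo a).
Qed.

Section lsc_integral.
Context {R : realType} {n : nat} (F : 'rV[R]_n -> \bar R).
Hypotheses (F_ge0 : forall z, (0 <= F z)%E) (F_lsc : lower_semicontinuous F).

Lemma lsc_approx_inE p k : 0 < p -> Defs.inE p (lsc_approx F k).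
Proof.
move=> p0; apply: (bounded_continuous_inE (K := k%:R)) => // [|z].
  exact: continuous_lsc_approx.
by rewrite ger0_norm ?lsc_approx_ge0 ?lsc_approx_le.
Qed.

Let measurable_lsc_approx k :
  measurable_fun setT (fun z : borel_rV n => (lsc_approx F k z)%:E).
Proof.
apply/measurable_EFinP; apply: continuous_measurable_rV.
exact: continuous_lsc_approx.
Qed.

Variable mu : probability (@borel_rV R n) R.

Lemma integral_lsc_approx_le k :
  (\int[mu]_z (lsc_approx F k z)%:E <= \int[mu]_z F z)%E.
Proof.
apply: ge0_le_integral => //.
- by move=> z _; rewrite lee_fin lsc_approx_ge0.
- exact: lower_semicontinuous_measurable_rV.
- by move=> z _; exact: lsc_approx_le_fun.
Qed.

Lemma integral_lsc_approx_cvg :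
  (\int[mu]_z (lsc_approx F k z)%:E)%E @[k --> \oo] --> (\int[mu]_z F z)%E.
Proof.
have -> : (\int[mu]_z F z = \int[mu]_z limn (fun k => (lsc_approx F k z)%:E))%E.
  by apply: eq_integral => z _; apply/esym/cvg_lim => //; exact: lsc_approx_cvg.
apply: cvg_monotone_convergence => //.
- by move=> k z _; rewrite lee_fin lsc_approx_ge0.
- by move=> z _ i j ij; rewrite lee_fin lsc_approx_nondecreasing.
Qed.

End lsc_integral.

Lemma weakstar_closed_in_sublevel {R : realType} {n : nat} (p : R)
    (F : 'rV[R]_n -> \bar R) (c : \bar R) (P Y : set (probability (borel_rV n) R)) :
  0 < p -> (forall z, (0 <= F z)%E) -> lower_semicontinuous F -> Y `<=` P ->
  weakstar_closed_in p Y [set mu | P mu /\ (\int[mu]_z F z <= c)%E].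
Proof.
move=> p0 F0 Flsc YP mu Ymu mu_adh; split; first exact: YP.
have Fmu := integral_lsc_approx_cvg F0 Flsc (mu := mu).
rewrite -(cvg_lim _ Fmu) //; apply: lime_le.
  by apply/cvg_ex; exists (\int[mu]_z F z)%E.
apply: nearW => k; apply/lee_addgt0Pr => e e0; set g := lsc_approx F k.
have gE h : h \in [:: g] -> Defs.inE p h.
  by rewrite mem_seq1 => /eqP ->; exact: lsc_approx_inE.
have [nu [_ nuc] /(_ g (mem_head _ _)) gap] := mu_adh [:: g] e gE e0.
have gK z : `|g z| <= k%:R by rewrite ger0_norm ?lsc_approx_ge0 ?lsc_approx_le.
have gc : continuous g by exact: continuous_lsc_approx.
have := lte_dist_lee (pairing_fin_num nu gc gK) (pairing_fin_num mu gc gK) gap.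
move=> /le_trans; apply; rewrite leeD2r //; apply: le_trans nuc.
exact: integral_lsc_approx_le.
Qed.

Section Rfun.
Context {R : realType} {N n d : nat} (p : R)
  (lam : {measure set (@borel_rV R N) -> \bar R}) (O : set (@borel_rV R N))
  (A : 'I_N -> 'M[R]_(n, d)) (F : 'rV[R]_n -> \bar R).

Lemma Rfun_ge0 xi : (forall z, 0 <= F z)%E -> (0 <= Rfun p lam O A F xi)%E.
Proof.
move=> F0; apply: le_ereal_inf_tmp => _ [nu _ <-].
by apply: integral_ge0 => z _; exact: F0.
Qed.

Lemma Rfun_adherent xi (eps : R) : 0 < eps -> Rfun p lam O A F xi \is a fin_num ->
  exists2 nu, Hp0 p lam O A nu &
    (\int[nu]_z F ((z : 'rV[R]_n) + xi) <= eps%:E + Rfun p lam O A F xi)%E.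
Proof.
move=> eps0 /(lb_ereal_inf_adherent eps0)[_ [nu Hnu <-] nu_lt].
by exists nu => //; rewrite addeC ltW.
Qed.

End Rfun.

Theorem lemma3p4 (R : realType) (N n d : nat) (p : R)
  (lam : {measure set (borel_rV N) -> \bar R})
  (O : set (borel_rV N)) (A : 'I_N -> 'M[R]_(n, d))
  (F : 'rV[R]_n -> \bar R) (eps : R) (M : nat) (CM : R) :
  1 < p ->
  is_lebesgue lam ->
  open (O : set 'rV[R]_N) -> bounded_set (O : set 'rV[R]_N) ->
  lam (boundary (O : set 'rV[R]_N)) = 0%E ->
  constant_rank A ->
  lower_semicontinuous F ->
  (forall z, (0 <= F z)%E) ->
  (exists C : R, 0 < C /\ forall z, ((C * enorm z `^ p)%:E <= F z)%E) ->
  0 < eps ->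
  let Rx := Rfun p lam O A F in
  let OmegaM := [set xi : 'rV[R]_n | enorm xi < M%:R /\ (Rx xi <= M%:R%:E)%E] in
  0 < CM ->
  (forall (mu : probability (borel_rV n) R) (xi : 'rV[R]_n),
     Hp0 p lam O A mu -> OmegaM xi ->
     (\int[mu]_z F ((z : 'rV[R]_n) + xi)%R <= eps%:E + Rx xi)%E ->
     (pmoment p mu <= CM%:E)%E) ->
  let YM := [set mu | Hp0 p lam O A mu /\ (pmoment p mu <= CM%:E)%E] in
  forall xi, OmegaM xi ->
    let Fxi := [set mu | Hp0 p lam O A mu /\
                         (\int[mu]_z F ((z : 'rV[R]_n) + xi)%R <= eps%:E + Rx xi)%E] in
    Fxi !=set0 /\ Fxi `<=` YM /\ weakstar_closed_in p YM Fxi.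
Proof.
move=> p1 _ _ _ _ _ F_lsc F0 _ eps0 Rx OmegaM _ moment_bound YM xi xiM Fxi.
have Rx_fin : Rx xi \is a fin_num.
  have [_ RxM] := xiM.
  by rewrite ge0_fin_numE ?Rfun_ge0 //; rewrite (le_lt_trans RxM) ?ltry.
split.
  by have [nu] := Rfun_adherent eps0 Rx_fin; exists nu.
split; first by move=> mu [Hmu Hle]; split => //; exact: (moment_bound mu xi).
have shift_cont : continuous (fun z : 'rV[R]_n => z + xi).
  by move=> z; exact: (cvgD (@cvg_id _ _) (cvg_cst xi)).
apply: weakstar_closed_in_sublevel => //; first lra.
- exact: lower_semicontinuous_comp shift_cont F_lsc.
- by move=> mu [].
Qed.
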